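(* Let $(U,V)$ be a pair of random variables taking values in finite sets $\mathcal{U}\times\mathcal{V}$ with joint probability mass function $p(u,v)$ and marginals $p(u),p(v)$. Let $\mathcal{U}_1,\dots,\mathcal{U}_{\tilde N_u}$ be a partition of $\mathcal{U}$ into nonempty pairwise disjoint blocks and $\mathcal{V}_1,\dots,\mathcal{V}_{\tilde N_v}$ a partition of $\mathcal{V}$ into nonempty pairwise disjoint blocks (the synonymous mappings), with associated semantic variables $\tilde U,\tilde V$. Then (chain rule of mutual information) $$I_s(\tilde U;\tilde V)\le H_s(\tilde V)-H(V\mid U)\le I(U;V)\le H(V)-H_s(\tilde V\mid U)\le I^s(\tilde U;\tilde V),$$ where $I(U;V)$ is the Shannon mutual information and $H(V)$, $H(V\mid U)$ are Shannon entropies.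
   Context: Write $p(\mathcal{U}_{i_s})=\sum_{u\in\mathcal{U}_{i_s}}p(u)$, $p(\mathcal{V}_{j_s})=\sum_{v\in\mathcal{V}_{j_s}}p(v)$, $p(\mathcal{U}_{i_s}\times\mathcal{V}_{j_s})=\sum_{(u,v)\in\mathcal{U}_{i_s}\times\mathcal{V}_{j_s}}p(u,v)$. Semantic entropies: $H_s(\tilde U)=-\sum_{i_s}p(\mathcal{U}_{i_s})\log p(\mathcal{U}_{i_s})$, $H_s(\tilde V)=-\sum_{j_s}p(\mathcal{V}_{j_s})\log p(\mathcal{V}_{j_s})$, $H_s(\tilde U,\tilde V)=-\sum_{i_s,j_s}p(\mathcal{U}_{i_s}\times\mathcal{V}_{j_s})\log p(\mathcal{U}_{i_s}\times\mathcal{V}_{j_s})$. Semantic conditional entropy: $H_s(\tilde V\mid U)=-\sum_{u:p(u)>0}\sum_{j_s}p(u)\,p(\mathcal{V}_{j_s}\mid u)\log p(\mathcal{V}_{j_s}\mid u)$ with $p(\mathcal{V}_{j_s}\mid u)=\sum_{v\in\mathcal{V}_{j_s}}p(v\mid u)$. Up semantic mutual information: $I^s(\tilde U;\tilde V)=H(U)+H(V)-H_s(\tilde U,\tilde V)$. Down semantic mutual information: $I_s(\tilde U;\tilde V)=H_s(\tilde U)+H_s(\tilde V)-H(U,V)$ (which may be negative). Logarithms are to base 2 and $0\log 0=0$. *)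

From mathcomp Require Import all_boot all_order all_algebra.
From mathcomp Require Import reals exp.
Set Implicit Arguments. Unset Strict Implicit. Unset Printing Implicit Defensive.
Import Order.TTheory GRing.Theory Num.Theory.
Local Open Scope ring_scope.

Section Info.
Variables (R : realType) (U V : finType) (p : U -> V -> R).

Definition log2 (x : R) : R := ln x / ln 2.

Definition xlogx (x : R) : R := if x == 0 then 0 else x * log2 x.

Definition pU (u : U) : R := \sum_(v : V) p u v.
Definition pV (v : V) : R := \sum_(u : U) p u v.

Definition H_U : R := - \sum_(u : U) xlogx (pU u).
Definition H_V : R := - \sum_(v : V) xlogx (pV v).
Definition H_UV : R := - \sum_(u : U) \sum_(v : V) xlogx (p u v).
Definition H_V_given_U : R :=
  - \sum_(u : U | 0 < pU u) \sum_(v : V) pU u * xlogx (p u v / pU u).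
Definition I_UV : R := H_U + H_V - H_UV.

Variables (PU : {set {set U}}) (PV : {set {set V}}).

Definition pUblk (A : {set U}) : R := \sum_(u in A) pU u.
Definition pVblk (B : {set V}) : R := \sum_(v in B) pV v.
Definition pUVblk (A : {set U}) (B : {set V}) : R :=
  \sum_(u in A) \sum_(v in B) p u v.

Definition Hs_U : R := - \sum_(A in PU) xlogx (pUblk A).
Definition Hs_V : R := - \sum_(B in PV) xlogx (pVblk B).
Definition Hs_UV : R := - \sum_(A in PU) \sum_(B in PV) xlogx (pUVblk A B).
Definition Hs_V_given_U : R :=
  - \sum_(u : U | 0 < pU u) \sum_(B in PV)
      pU u * xlogx (\sum_(v in B) (p u v / pU u)).

Definition Iup_s : R := H_U + H_V - Hs_UV.
Definition Idown_s : R := Hs_U + Hs_V - H_UV.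

End Info.

(* Merging outcomes into blocks can only lower entropy, because x log x is
   superadditive on nonnegative reals; the same holds row by row for the
   conditional entropies, so H_s(V~) <= H(V), H_s(U~) <= H(U) and
   H_s(V~|U) <= H(V|U).  Grouping a joint sum row by row gives the chain rule
   H(U,V) = H(U) + H(V|U), and likewise H(U,V~) = H(U) + H_s(V~|U), while
   coarsening U gives H_s(U~,V~) <= H(U,V~).  Each of the four inequalities
   is one of these comparisons after rewriting with the chain rule. *)
From mathcomp Require Import all_boot all_order all_algebra.
From mathcomp Require Import reals exp.
From mathcomp Require Import ring lra.
Import Order.TTheory GRing.Theory Num.Theory.
Set Implicit Arguments. Unset Strict Implicit.
Local Open Scope ring_scope.

Section XLogX.
Variable R : realType.

Lemma ln2_gt0 : 0 < ln (2 : R).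
Proof. by apply: ln_gt0; rewrite ltr1n. Qed.

Lemma ler_log2 (x y : R) : 0 < x -> x <= y -> log2 x <= log2 y.
Proof.
move=> x_gt0 le_xy; rewrite /log2 ler_pM2r ?invr_gt0 ?ln2_gt0 //.
by rewrite ler_ln // posrE (lt_le_trans x_gt0 le_xy).
Qed.

Lemma xlogx0 : xlogx (0 : R) = 0.
Proof. by rewrite /xlogx eqxx. Qed.

Lemma xlogxD_ge (a b : R) : 0 <= a -> 0 <= b ->
  xlogx a + xlogx b <= xlogx (a + b).
Proof.
rewrite le0r => /orP[/eqP->|a_gt0]; first by rewrite xlogx0 !add0r.
rewrite le0r => /orP[/eqP->|b_gt0]; first by rewrite xlogx0 !addr0.
have ab_gt0 : 0 < a + b by rewrite addr_gt0.
rewrite /xlogx (gt_eqF a_gt0) (gt_eqF b_gt0) (gt_eqF ab_gt0) mulrDl.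
by apply: lerD; rewrite ler_pM2l //; apply: ler_log2 => //; lra.
Qed.

Lemma sum_xlogx_le (I : Type) (r : seq I) (P : pred I) (x : I -> R) :
  (forall i, P i -> 0 <= x i) ->
  \sum_(i <- r | P i) xlogx (x i) <= xlogx (\sum_(i <- r | P i) x i).
Proof.
move=> x_ge0.
suff [] : 0 <= \sum_(i <- r | P i) x i /\
  \sum_(i <- r | P i) xlogx (x i) <= xlogx (\sum_(i <- r | P i) x i) by [].
apply: (big_rec2 (fun s t => 0 <= t /\ s <= xlogx t)); first by rewrite xlogx0.
move=> i t s Pi [t_ge0 le_st]; split; first by rewrite addr_ge0 ?x_ge0.
by apply: le_trans (xlogxD_ge (x_ge0 _ Pi) t_ge0); rewrite lerD2l.
Qed.

(* For s = \sum_i x i > 0 this is x log x = s log s + s * ((x/s) log (x/s))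
   summed over i; when s = 0 every x i vanishes. *)
Lemma sum_xlogx_chain (I : finType) (P : pred I) (x : I -> R) :
  (forall i, P i -> 0 <= x i) ->
  let s := \sum_(i | P i) x i in
  \sum_(i | P i) xlogx (x i) =
    xlogx s + (if 0 < s then \sum_(i | P i) s * xlogx (x i / s) else 0).
Proof.
move=> x_ge0 s; have s_ge0 : 0 <= s by rewrite sumr_ge0.
case: ifPn => [s_gt0|]; last first.
  rewrite -leNgt => s_le0.
  have s0 : s = 0 by apply/le_anti; rewrite s_le0 s_ge0.
  have /psumr_eq0P x0 : \sum_(i | P i) x i = 0 by [].
  by rewrite s0 xlogx0 !addr0 big1 // => i Pi; rewrite x0 // xlogx0.
have -> : xlogx s = \sum_(i | P i) x i * log2 s.
  by rewrite -mulr_suml /xlogx (gt_eqF s_gt0).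
rewrite -big_split /=; apply: eq_bigr => i Pi.
have := x_ge0 i Pi; rewrite le0r => /orP[/eqP->|xi_gt0].
  by rewrite !(mul0r, xlogx0, mulr0, add0r).
have q_gt0 : 0 < x i / s by rewrite divr_gt0.
rewrite /xlogx (gt_eqF xi_gt0) (gt_eqF q_gt0) /log2 ln_div ?posrE //.
by field; rewrite (gt_eqF s_gt0) (gt_eqF ln2_gt0).
Qed.

Lemma sum_partition (T : finType) (P : {set {set T}}) (f : T -> R) :
  partition P [set: T] -> \sum_i f i = \sum_(A in P) \sum_(i in A) f i.
Proof.
move=> partP; rewrite -(set_partition_big _ partP).
by apply: eq_bigl => i; rewrite in_setT.
Qed.

Lemma sum_xlogx_le_partition (T : finType) (P : {set {set T}}) (f : T -> R) :
  partition P [set: T] -> (forall i, 0 <= f i) ->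
  \sum_i xlogx (f i) <= \sum_(A in P) xlogx (\sum_(i in A) f i).
Proof.
move=> partP f_ge0; rewrite (sum_partition _ partP); apply: ler_sum => A _.
exact: sum_xlogx_le.
Qed.

End XLogX.

Section SemanticEntropy.
Variables (R : realType) (U V : finType) (p : U -> V -> R).
Variables (PU : {set {set U}}) (PV : {set {set V}}).
Hypothesis p_ge0 : forall u v, 0 <= p u v.
Hypothesis partPU : partition PU [set: U].
Hypothesis partPV : partition PV [set: V].

Lemma pU_ge0 u : 0 <= pU p u.
Proof. exact: sumr_ge0. Qed.

Lemma pV_ge0 v : 0 <= pV p v.
Proof. exact: sumr_ge0. Qed.

Lemma sum_xlogx_rows_chain (I : finType) (P : pred I) (q : U -> I -> R) :
  (forall u i, 0 <= q u i) -> (forall u, \sum_(i | P i) q u i = pU p u) ->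
  \sum_u \sum_(i | P i) xlogx (q u i) =
    \sum_u xlogx (pU p u) +
    \sum_(u | 0 < pU p u) \sum_(i | P i) pU p u * xlogx (q u i / pU p u).
Proof.
move=> q_ge0 rows; rewrite [X in _ + X]big_mkcond -big_split /=.
apply: eq_bigr => u _; rewrite -rows.
exact: (sum_xlogx_chain (fun i _ => q_ge0 u i)).
Qed.

Lemma H_UV_chain : H_UV p = H_U p + H_V_given_U p.
Proof. by rewrite /H_UV (sum_xlogx_rows_chain p_ge0 (fun _ => erefl)) opprD. Qed.

Lemma H_U_V_semantic_chain :
  \sum_u \sum_(B in PV) xlogx (\sum_(v in B) p u v) =
    - (H_U p + Hs_V_given_U p PV).
Proof.
have rows u : \sum_(B in PV) \sum_(v in B) p u v = pU p u.
  by rewrite /pU (sum_partition _ partPV).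
rewrite (sum_xlogx_rows_chain (fun u B => sumr_ge0 _ (fun v _ => p_ge0 u v)) rows).
rewrite opprD !opprK; congr (_ + _); apply: eq_bigr => u _.
by apply: eq_bigr => B _; rewrite -mulr_suml.
Qed.

Lemma Hs_U_le : Hs_U p PU <= H_U p.
Proof. by rewrite lerN2; apply: sum_xlogx_le_partition => // u; apply: pU_ge0. Qed.

Lemma Hs_V_le : Hs_V p PV <= H_V p.
Proof. by rewrite lerN2; apply: sum_xlogx_le_partition => // v; apply: pV_ge0. Qed.

Lemma Hs_V_given_U_le : Hs_V_given_U p PV <= H_V_given_U p.
Proof.
rewrite lerN2; apply: ler_sum => u pU_gt0; rewrite -!mulr_sumr ler_pM2l //.
by apply: sum_xlogx_le_partition => // v; rewrite divr_ge0 ?pU_ge0.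
Qed.

Lemma Hs_UV_le : Hs_UV p PU PV <= H_U p + Hs_V_given_U p PV.
Proof.
rewrite -[_ + _]opprK -H_U_V_semantic_chain lerN2.
rewrite exchange_big [X in _ <= X]exchange_big /=; apply: ler_sum => B _.
by apply: sum_xlogx_le_partition => // u; apply: sumr_ge0.
Qed.

End SemanticEntropy.

Theorem theorem2 (R : realType) (U V : finType) (p : U -> V -> R)
  (PU : {set {set U}}) (PV : {set {set V}}) :
  (forall u v, 0 <= p u v) ->
  \sum_(u : U) \sum_(v : V) p u v = 1 ->
  partition PU [set: U] ->
  partition PV [set: V] ->
  [/\ Idown_s p PU PV <= Hs_V p PV - H_V_given_U p,
      Hs_V p PV - H_V_given_U p <= I_UV p,
      I_UV p <= H_V p - Hs_V_given_U p PV
    & H_V p - Hs_V_given_U p PV <= Iup_s p PU PV].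
Proof.
move=> p_ge0 _ partPU partPV.
have HsU := Hs_U_le p_ge0 partPU; have HsV := Hs_V_le p_ge0 partPV.
have HsVU := Hs_V_given_U_le p_ge0 partPV.
have HsUV := Hs_UV_le p_ge0 partPU partPV.
rewrite /Idown_s /I_UV /Iup_s (H_UV_chain p_ge0); split; lra.
Qed.
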